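(* In the setting below, suppose the marching-scale functions have the form $u(s,t,q)=l(s)U(t,q)$, $v(s,t,q)=m(s)V(t,q)$, $w(s,t,q)=n(s)W(t,q)$, $x(s,t,q)=p(s)X(t,q)$ with $l,m,n,p,U,V,W,X$ of class $C^1$ and $l(s),m(s),n(s),p(s)\neq0$ for all $s\in[L_1,L_2]$. Then $\mathbf r$ is an isogeodesic of $\mathbf P$ at $(t_0,q_0)$ if and only if $$U(t_0,q_0)=V(t_0,q_0)=W(t_0,q_0)=X(t_0,q_0)=0,\quad \frac{\partial V}{\partial t}(t_0,q_0)=\frac{\partial V}{\partial q}(t_0,q_0)=0,$$ $$\frac{\partial W}{\partial t}(t_0,q_0)\frac{\partial X}{\partial q}(t_0,q_0)-\frac{\partial W}{\partial q}(t_0,q_0)\frac{\partial X}{\partial t}(t_0,q_0)\neq0.$$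
   Context: $\mathbf r:[L_1,L_2]\to\mathbb R^4$ is an arc-length curve with Frenet frame $\{\mathbf T,\mathbf N,\mathbf B_1,\mathbf B_2\}$ (orthonormal, $\mathbf T=\mathbf r'$, $\mathbf T'=k_1\mathbf N$, $\mathbf N'=-k_1\mathbf T+k_2\mathbf B_1$, $\mathbf B_1'=-k_2\mathbf N+k_3\mathbf B_2$, $\mathbf B_2'=-k_3\mathbf B_1$, $k_1>0$), and $\mathbf P(s,t,q)=\mathbf r(s)+u\mathbf T(s)+v\mathbf N(s)+w\mathbf B_1(s)+x\mathbf B_2(s)$ on $[L_1,L_2]\times[T_1,T_2]\times[Q_1,Q_2]$, with $t_0\in[T_1,T_2]$, $q_0\in[Q_1,Q_2]$ fixed. ''$\mathbf r$ is an isogeodesic of $\mathbf P$ at $(t_0,q_0)$'' means: $\mathbf P(s,t_0,q_0)=\mathbf r(s)$ for all $s$, $\partial_s\mathbf P,\partial_t\mathbf P,\partial_q\mathbf P$ are linearly independent at $(s,t_0,q_0)$, and $\mathbf N(s)$ is parallel to the normal $\partial_s\mathbf P\otimes\partial_t\mathbf P\otimes\partial_q\mathbf P$ (four-dimensional vector product) at $(s,t_0,q_0)$, for all $s$. *)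

From Stdlib Require Import Reals.
Open Scope R_scope.

Record Vec4 := mk4 { c0 : R; c1 : R; c2 : R; c3 : R }.

Definition vadd (a b : Vec4) : Vec4 :=
  mk4 (c0 a + c0 b) (c1 a + c1 b) (c2 a + c2 b) (c3 a + c3 b).
Definition vscal (k : R) (a : Vec4) : Vec4 :=
  mk4 (k * c0 a) (k * c1 a) (k * c2 a) (k * c3 a).
Definition vzero : Vec4 := mk4 0 0 0 0.
Definition dot4 (a b : Vec4) : R :=
  c0 a * c0 b + c1 a * c1 b + c2 a * c2 b + c3 a * c3 b.

Definition det3 (a1 a2 a3 b1 b2 b3 d1 d2 d3 : R) : R :=
  a1 * (b2 * d3 - b3 * d2) - a2 * (b1 * d3 - b3 * d1) + a3 * (b1 * d2 - b2 * d1).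

(* Four-dimensional vector product a (x) b (x) c, i.e. the formal determinant
   det [e1 e2 e3 e4; a; b; c] expanded along the first row. *)
Definition cross4 (a b c : Vec4) : Vec4 :=
  mk4
    (  det3 (c1 a) (c2 a) (c3 a) (c1 b) (c2 b) (c3 b) (c1 c) (c2 c) (c3 c))
    (- det3 (c0 a) (c2 a) (c3 a) (c0 b) (c2 b) (c3 b) (c0 c) (c2 c) (c3 c))
    (  det3 (c0 a) (c1 a) (c3 a) (c0 b) (c1 b) (c3 b) (c0 c) (c1 c) (c3 c))
    (- det3 (c0 a) (c1 a) (c2 a) (c0 b) (c1 b) (c2 b) (c0 c) (c1 c) (c2 c)).

Definition lin_indep3 (a b c : Vec4) : Prop :=
  forall x y z : R,
    vadd (vscal x a) (vadd (vscal y b) (vscal z c)) = vzero ->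
    x = 0 /\ y = 0 /\ z = 0.

Definition parallel4 (a b : Vec4) : Prop := exists k : R, a = vscal k b.

Definition in_cl (a b x : R) : Prop := a <= x <= b.

(* derivative of f at x relative to the domain D (one-sided at endpoints) *)
Definition deriv_within (D : R -> Prop) (f : R -> R) (x l : R) : Prop :=
  forall eps : R, 0 < eps -> exists delta : R, 0 < delta /\
    forall h : R, h <> 0 -> Rabs h < delta -> D (x + h) ->
      Rabs ((f (x + h) - f x) / h - l) < eps.

Definition vderiv_within (D : R -> Prop) (F : R -> Vec4) (x : R) (L : Vec4) : Prop :=
  deriv_within D (fun y => c0 (F y)) x (c0 L) /\
  deriv_within D (fun y => c1 (F y)) x (c1 L) /\
  deriv_within D (fun y => c2 (F y)) x (c2 L) /\
  deriv_within D (fun y => c3 (F y)) x (c3 L).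

Definition cont_on (D : R -> Prop) (f : R -> R) : Prop :=
  forall x, D x -> forall eps, 0 < eps -> exists delta, 0 < delta /\
    forall y, D y -> Rabs (y - x) < delta -> Rabs (f y - f x) < eps.

Definition cont2_on (D1 D2 : R -> Prop) (f : R -> R -> R) : Prop :=
  forall t q, D1 t -> D2 q -> forall eps, 0 < eps -> exists delta, 0 < delta /\
    forall t' q', D1 t' -> D2 q' -> Rabs (t' - t) < delta -> Rabs (q' - q) < delta ->
      Rabs (f t' q' - f t q) < eps.

Definition C1_on (D : R -> Prop) (f f' : R -> R) : Prop :=
  (forall x, D x -> deriv_within D f x (f' x)) /\ cont_on D f'.

Definition C1_on2 (D1 D2 : R -> Prop) (F Ft Fq : R -> R -> R) : Prop :=
  (forall t q, D1 t -> D2 q ->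
     deriv_within D1 (fun t' => F t' q) t (Ft t q) /\
     deriv_within D2 (fun q' => F t q') q (Fq t q)) /\
  cont2_on D1 D2 Ft /\ cont2_on D1 D2 Fq.

Definition orthonormal4 (T N B1 B2 : Vec4) : Prop :=
  dot4 T T = 1 /\ dot4 N N = 1 /\ dot4 B1 B1 = 1 /\ dot4 B2 B2 = 1 /\
  dot4 T N = 0 /\ dot4 T B1 = 0 /\ dot4 T B2 = 0 /\
  dot4 N B1 = 0 /\ dot4 N B2 = 0 /\ dot4 B1 B2 = 0.

Definition frenet4 (L1 L2 : R) (r T N B1 B2 : R -> Vec4) (k1 k2 k3 : R -> R) : Prop :=
  forall s, in_cl L1 L2 s ->
    orthonormal4 (T s) (N s) (B1 s) (B2 s) /\
    0 < k1 s /\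
    vderiv_within (in_cl L1 L2) r s (T s) /\
    vderiv_within (in_cl L1 L2) T s (vscal (k1 s) (N s)) /\
    vderiv_within (in_cl L1 L2) N s
      (vadd (vscal (- k1 s) (T s)) (vscal (k2 s) (B1 s))) /\
    vderiv_within (in_cl L1 L2) B1 s
      (vadd (vscal (- k2 s) (N s)) (vscal (k3 s) (B2 s))) /\
    vderiv_within (in_cl L1 L2) B2 s (vscal (- k3 s) (B1 s)).

Definition marching (r T N B1 B2 : R -> Vec4) (u v w x : R -> R -> R -> R)
  (s t q : R) : Vec4 :=
  vadd (r s) (vadd (vscal (u s t q) (T s)) (vadd (vscal (v s t q) (N s))
    (vadd (vscal (w s t q) (B1 s)) (vscal (x s t q) (B2 s))))).

Definition isogeodesic (L1 L2 T1 T2 Q1 Q2 t0 q0 : R)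
  (P : R -> R -> R -> Vec4) (r N : R -> Vec4) : Prop :=
  forall s, in_cl L1 L2 s ->
    P s t0 q0 = r s /\
    exists Ps Pt Pq : Vec4,
      vderiv_within (in_cl L1 L2) (fun s' => P s' t0 q0) s Ps /\
      vderiv_within (in_cl T1 T2) (fun t => P s t q0) t0 Pt /\
      vderiv_within (in_cl Q1 Q2) (fun q => P s t0 q) q0 Pq /\
      lin_indep3 Ps Pt Pq /\
      parallel4 (cross4 Ps Pt Pq) (N s).

From Stdlib Require Import Reals Lra Psatz.
Open Scope R_scope.

(* Along the curve, P(s,t0,q0) - r(s) has frame coordinates
   (l U, m V, n W, p X)(s,t0,q0), so P(.,t0,q0) = r iff U = V = W = X = 0 at (t0,q0);
   then dP/ds = T, while dP/dt and dP/dq are the frame combinations A, B with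
   coordinates (l Ut, m Vt, n Wt, p Xt) and (l Uq, m Vq, n Wq, p Xq).
   In an orthonormal frame (T, N, B1, B2) with orientation e = +-1,
   T (x) A (x) B = e (m34 N - m24 B1 + m23 B2), where m_ij = a_i b_j - a_j b_i are the
   2x2 minors of the (N,B1,B2)-coordinates of A and B.  Hence
   - T, A, B are independent iff some minor m23, m24, m34 is nonzero;
   - T (x) A (x) B is parallel to N iff m23 = m24 = 0;
   and both hold iff a2 = b2 = 0 and m34 <> 0, which for nonvanishing l, m, n, p
   is the stated condition. *)

Definition comb (a b c d : R) (T N B1 B2 : Vec4) : Vec4 :=
  vadd (vscal a T) (vadd (vscal b N) (vadd (vscal c B1) (vscal d B2))).

Definition det4 (a11 a12 a13 a14 a21 a22 a23 a24 a31 a32 a33 a34 a41 a42 a43 a44 : R) : R :=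
  a11 * det3 a22 a23 a24 a32 a33 a34 a42 a43 a44
  - a12 * det3 a21 a23 a24 a31 a33 a34 a41 a43 a44
  + a13 * det3 a21 a22 a24 a31 a32 a34 a41 a42 a44
  - a14 * det3 a21 a22 a23 a31 a32 a33 a41 a42 a43.

Lemma dot4_sym (a b : Vec4) : dot4 a b = dot4 b a.
Proof. unfold dot4; ring. Qed.

Lemma dot4_comb (e T N B1 B2 : Vec4) (a b c d : R) :
  dot4 e (comb a b c d T N B1 B2) =
  a * dot4 e T + b * dot4 e N + c * dot4 e B1 + d * dot4 e B2.
Proof. unfold comb, dot4, vadd, vscal; simpl; ring. Qed.

Lemma comb_lin (T N B1 B2 : Vec4) (x y z a1 a2 a3 a4 b1 b2 b3 b4 : R) :
  vadd (vscal x T) (vadd (vscal y (comb a1 a2 a3 a4 T N B1 B2))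
                         (vscal z (comb b1 b2 b3 b4 T N B1 B2)))
  = comb (x + y * a1 + z * b1) (y * a2 + z * b2) (y * a3 + z * b3) (y * a4 + z * b4)
         T N B1 B2.
Proof. unfold comb, vadd, vscal; simpl; f_equal; ring. Qed.

Lemma comb_zero (T N B1 B2 : Vec4) : comb 0 0 0 0 T N B1 B2 = vzero.
Proof. unfold comb, vadd, vscal, vzero; simpl; f_equal; ring. Qed.

Lemma vscal_as_comb (T N B1 B2 : Vec4) (k : R) : vscal k N = comb 0 k 0 0 T N B1 B2.
Proof. unfold comb, vadd, vscal; simpl; f_equal; ring. Qed.

(* The vector product is trilinear and alternating, so T (x) A (x) B only sees
   the (N,B1,B2)-parts of A and B, through their 2x2 minors. *)
Lemma cross4_comb_expand (T N B1 B2 : Vec4) (a1 a2 a3 a4 b1 b2 b3 b4 : R) :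
  cross4 T (comb a1 a2 a3 a4 T N B1 B2) (comb b1 b2 b3 b4 T N B1 B2) =
  vadd (vscal (a2 * b3 - a3 * b2) (cross4 T N B1))
   (vadd (vscal (a2 * b4 - a4 * b2) (cross4 T N B2))
         (vscal (a3 * b4 - a4 * b3) (cross4 T B1 B2))).
Proof.
destruct T as [t0 t1 t2 t3], N as [n0 n1 n2 n3], B1 as [e0 e1 e2 e3],
  B2 as [f0 f1 f2 f3].
unfold comb, cross4, vadd, vscal, det3; simpl; f_equal; ring.
Qed.

Lemma cross4_gram (a b c : Vec4) :
  dot4 (cross4 a b c) (cross4 a b c) =
  det3 (dot4 a a) (dot4 a b) (dot4 a c) (dot4 b a) (dot4 b b) (dot4 b c)
       (dot4 c a) (dot4 c b) (dot4 c c).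
Proof.
destruct a as [a0 a1 a2 a3], b as [b0 b1 b2 b3], c as [e0 e1 e2 e3].
unfold dot4, cross4, det3; simpl; ring. Qed.

Lemma det4_gram (a b c d : Vec4) :
  (dot4 (cross4 b c d) a) ^ 2 =
  det4 (dot4 a a) (dot4 a b) (dot4 a c) (dot4 a d)
       (dot4 b a) (dot4 b b) (dot4 b c) (dot4 b d)
       (dot4 c a) (dot4 c b) (dot4 c c) (dot4 c d)
       (dot4 d a) (dot4 d b) (dot4 d c) (dot4 d d).
Proof.
destruct a as [a0 a1 a2 a3], b as [b0 b1 b2 b3], c as [e0 e1 e2 e3], d as [d0 d1 d2 d3].
unfold det4, dot4, cross4, det3; simpl; ring. Qed.

Lemma parallel_of_norm (v e : Vec4) :
  dot4 e e = 1 -> dot4 v v = (dot4 v e) ^ 2 -> v = vscal (dot4 v e) e.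
Proof.
intros He Hv.
destruct v as [x0 x1 x2 x3], e as [d0 d1 d2 d3]; unfold dot4 in *; simpl in *.
set (j := x0 * d0 + x1 * d1 + x2 * d2 + x3 * d3) in *.
assert (Hsq : (x0 - j * d0) ^ 2 + (x1 - j * d1) ^ 2 + (x2 - j * d2) ^ 2
              + (x3 - j * d3) ^ 2 = 0).
{ transitivity ((x0 * x0 + x1 * x1 + x2 * x2 + x3 * x3) - 2 * j * j
                + j * j * (d0 * d0 + d1 * d1 + d2 * d2 + d3 * d3)).
  - unfold j; ring.
  - rewrite Hv, He; ring. }
pose proof (pow2_ge_0 (x0 - j * d0)); pose proof (pow2_ge_0 (x1 - j * d1)).
pose proof (pow2_ge_0 (x2 - j * d2)); pose proof (pow2_ge_0 (x3 - j * d3)).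
unfold vscal; simpl; f_equal; nra.
Qed.

Lemma cramer2 (a b c d y z : R) :
  a * d - b * c <> 0 -> y * a + z * c = 0 -> y * b + z * d = 0 -> y = 0 /\ z = 0.
Proof.
intros Hdet E1 E2.
assert (Hy : y * (a * d - b * c) = 0)
  by (transitivity (d * (y * a + z * c) - c * (y * b + z * d)); [ring | rewrite E1, E2; ring]).
assert (Hz : z * (a * d - b * c) = 0)
  by (transitivity (a * (y * b + z * d) - b * (y * a + z * c)); [ring | rewrite E1, E2; ring]).
split; [destruct (Rmult_integral _ _ Hy) | destruct (Rmult_integral _ _ Hz)]; tauto.
Qed.

Lemma pair_indep_iff_minors (a2 a3 a4 b2 b3 b4 : R) :
  (forall y z, y * a2 + z * b2 = 0 -> y * a3 + z * b3 = 0 -> y * a4 + z * b4 = 0 ->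
     y = 0 /\ z = 0)
  <-> ~ (a2 * b3 - a3 * b2 = 0 /\ a2 * b4 - a4 * b2 = 0 /\ a3 * b4 - a4 * b3 = 0).
Proof.
split.
- intros Hind (m23 & m24 & m34).
  destruct (Req_dec b2 0) as [h2 | h2].
  2:{ destruct (Hind b2 (- a2)); nra. }
  destruct (Req_dec b3 0) as [h3 | h3].
  2:{ destruct (Hind b3 (- a3)); nra. }
  destruct (Req_dec b4 0) as [h4 | h4].
  2:{ destruct (Hind b4 (- a4)); nra. }
  destruct (Hind 0 1); subst; lra.
- intros Hminor y z E2 E3 E4.
  destruct (Req_dec (a2 * b3 - a3 * b2) 0) as [m23 | m23].
  2:{ exact (cramer2 _ _ _ _ _ _ m23 E2 E3). }
  destruct (Req_dec (a2 * b4 - a4 * b2) 0) as [m24 | m24].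
  2:{ exact (cramer2 _ _ _ _ _ _ m24 E2 E4). }
  destruct (Req_dec (a3 * b4 - a4 * b3) 0) as [m34 | m34].
  + tauto.
  + exact (cramer2 _ _ _ _ _ _ m34 E3 E4).
Qed.

Lemma minors_condition (a2 a3 a4 b2 b3 b4 : R) :
  (a2 * b3 - a3 * b2 = 0 /\ a2 * b4 - a4 * b2 = 0 /\ a3 * b4 - a4 * b3 <> 0)
  <-> (a2 = 0 /\ b2 = 0 /\ a3 * b4 - a4 * b3 <> 0).
Proof.
split.
- intros (m23 & m24 & m34).
  assert (Ha : a2 * (a3 * b4 - a4 * b3) = 0)
    by (transitivity (a3 * (a2 * b4 - a4 * b2) - a4 * (a2 * b3 - a3 * b2));
        [ring | rewrite m23, m24; ring]).
  assert (Hb : b2 * (a3 * b4 - a4 * b3) = 0)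
    by (transitivity (b3 * (a2 * b4 - a4 * b2) - b4 * (a2 * b3 - a3 * b2));
        [ring | rewrite m23, m24; ring]).
  destruct (Rmult_integral _ _ Ha), (Rmult_integral _ _ Hb); tauto.
- intros (-> & -> & m34). repeat split; [ring | ring | exact m34].
Qed.

Lemma vadd_eq_self (O v : Vec4) : vadd O v = O <-> v = vzero.
Proof.
destruct O as [o0 o1 o2 o3], v as [v0 v1 v2 v3]; unfold vadd, vzero; simpl.
split; intros E; injection E; intros; f_equal; lra.
Qed.

Section OrthonormalFrame.

Variables T N B1 B2 : Vec4.
Hypothesis frame : orthonormal4 T N B1 B2.

Lemma comb_coords (a b c d : R) :
  dot4 T (comb a b c d T N B1 B2) = a /\ dot4 N (comb a b c d T N B1 B2) = b /\
  dot4 B1 (comb a b c d T N B1 B2) = c /\ dot4 B2 (comb a b c d T N B1 B2) = d.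
Proof.
destruct frame as (hTT & hNN & h11 & h22 & hTN & hT1 & hT2 & hN1 & hN2 & h12).
rewrite !dot4_comb, (dot4_sym N T), (dot4_sym B1 T), (dot4_sym B2 T),
  (dot4_sym B1 N), (dot4_sym B2 N), (dot4_sym B2 B1).
rewrite hTT, hNN, h11, h22, hTN, hT1, hT2, hN1, hN2, h12.
repeat split; ring.
Qed.

Lemma comb_inj (a b c d a' b' c' d' : R) :
  comb a b c d T N B1 B2 = comb a' b' c' d' T N B1 B2 ->
  a = a' /\ b = b' /\ c = c' /\ d = d'.
Proof.
intros E.
destruct (comb_coords a b c d) as (ea & eb & ec & ed).
destruct (comb_coords a' b' c' d') as (ea' & eb' & ec' & ed').
rewrite E in ea, eb, ec, ed. repeat split; congruence.
Qed.

(* The orientation of the frame: e = det[N;T;B1;B2] = +-1. *)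
Definition orientation : R := dot4 (cross4 T B1 B2) N.

Lemma orientation_sq : orientation ^ 2 = 1.
Proof.
destruct frame as (hTT & hNN & h11 & h22 & hTN & hT1 & hT2 & hN1 & hN2 & h12).
unfold orientation; rewrite det4_gram.
rewrite (dot4_sym N T), (dot4_sym B1 N), (dot4_sym B2 N), (dot4_sym B1 T),
  (dot4_sym B2 T), (dot4_sym B2 B1).
rewrite hTT, hNN, h11, h22, hTN, hT1, hT2, hN1, hN2, h12.
unfold det4, det3; ring.
Qed.

(* The vector product of three orthonormal vectors is a unit vector, hence equals
   +-d for the fourth frame vector d once its component along d is +-1. *)
Lemma cross4_orthonormal (a b c d : Vec4) :
  dot4 a a = 1 -> dot4 b b = 1 -> dot4 c c = 1 ->
  dot4 a b = 0 -> dot4 a c = 0 -> dot4 b c = 0 -> dot4 d d = 1 ->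
  (dot4 (cross4 a b c) d) ^ 2 = 1 -> cross4 a b c = vscal (dot4 (cross4 a b c) d) d.
Proof.
intros haa hbb hcc hab hac hbc hdd hk. apply parallel_of_norm; auto.
rewrite hk, cross4_gram, (dot4_sym b a), (dot4_sym c a), (dot4_sym c b).
rewrite haa, hbb, hcc, hab, hac, hbc; unfold det3; ring.
Qed.

Lemma frame_cross_products :
  cross4 T B1 B2 = vscal orientation N /\
  cross4 T N B1 = vscal orientation B2 /\
  cross4 T N B2 = vscal (- orientation) B1.
Proof.
pose proof orientation_sq as Hk.
destruct frame as (hTT & hNN & h11 & h22 & hTN & hT1 & hT2 & hN1 & hN2 & h12).
assert (S1 : dot4 (cross4 T N B1) B2 = orientation).
{ unfold orientation; destruct T as [t0 t1 t2 t3], N as [n0 n1 n2 n3], B1 as [e0 e1 e2 e3],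
    B2 as [f0 f1 f2 f3]; unfold dot4, cross4, det3; simpl; ring. }
assert (S2 : dot4 (cross4 T N B2) B1 = - orientation).
{ unfold orientation; destruct T as [t0 t1 t2 t3], N as [n0 n1 n2 n3], B1 as [e0 e1 e2 e3],
    B2 as [f0 f1 f2 f3]; unfold dot4, cross4, det3; simpl; ring. }
repeat split.
- apply cross4_orthonormal; auto.
- rewrite <- S1; apply cross4_orthonormal; auto; rewrite S1; auto.
- rewrite <- S2; apply cross4_orthonormal; auto; rewrite S2; nra.
Qed.

Lemma cross4_comb (a1 a2 a3 a4 b1 b2 b3 b4 : R) :
  cross4 T (comb a1 a2 a3 a4 T N B1 B2) (comb b1 b2 b3 b4 T N B1 B2) =
  comb 0 (orientation * (a3 * b4 - a4 * b3)) (- (orientation * (a2 * b4 - a4 * b2)))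
       (orientation * (a2 * b3 - a3 * b2)) T N B1 B2.
Proof.
destruct frame_cross_products as (C1 & C2 & C3).
rewrite cross4_comb_expand, C1, C2, C3.
unfold comb, vadd, vscal; simpl; f_equal; ring.
Qed.

Lemma lin_indep_comb_iff (a1 a2 a3 a4 b1 b2 b3 b4 : R) :
  lin_indep3 T (comb a1 a2 a3 a4 T N B1 B2) (comb b1 b2 b3 b4 T N B1 B2)
  <-> ~ (a2 * b3 - a3 * b2 = 0 /\ a2 * b4 - a4 * b2 = 0 /\ a3 * b4 - a4 * b3 = 0).
Proof.
rewrite <- pair_indep_iff_minors. unfold lin_indep3. split.
- intros Hind y z E2 E3 E4.
  destruct (Hind (- (y * a1 + z * b1)) y z) as (_ & Hy & Hz); [|tauto].
  rewrite comb_lin, E2, E3, E4, <- (comb_zero T N B1 B2). f_equal; ring.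
- intros Hpair x y z E.
  rewrite comb_lin, <- (comb_zero T N B1 B2) in E.
  destruct (comb_inj _ _ _ _ _ _ _ _ E) as (E1 & E2 & E3 & E4).
  destruct (Hpair y z E2 E3 E4) as [-> ->]. repeat split; lra.
Qed.

Lemma parallel_normal_iff (a1 a2 a3 a4 b1 b2 b3 b4 : R) :
  parallel4 (cross4 T (comb a1 a2 a3 a4 T N B1 B2) (comb b1 b2 b3 b4 T N B1 B2)) N
  <-> a2 * b3 - a3 * b2 = 0 /\ a2 * b4 - a4 * b2 = 0.
Proof.
unfold parallel4. rewrite cross4_comb.
pose proof orientation_sq as He.
assert (Hnz : orientation <> 0) by (intro Z; rewrite Z in He; lra).
split.
- intros [k Hk]. rewrite (vscal_as_comb T N B1 B2) in Hk.
  destruct (comb_inj _ _ _ _ _ _ _ _ Hk) as (_ & _ & E24 & E23).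
  assert (E24' : orientation * (a2 * b4 - a4 * b2) = 0) by lra.
  destruct (Rmult_integral _ _ E23), (Rmult_integral _ _ E24'); tauto.
- intros [-> ->]. exists (orientation * (a3 * b4 - a4 * b3)).
  rewrite (vscal_as_comb T N B1 B2). f_equal; ring.
Qed.

Lemma frame_isogeodesic_condition (a1 a2 a3 a4 b1 b2 b3 b4 : R) :
  lin_indep3 T (comb a1 a2 a3 a4 T N B1 B2) (comb b1 b2 b3 b4 T N B1 B2) /\
  parallel4 (cross4 T (comb a1 a2 a3 a4 T N B1 B2) (comb b1 b2 b3 b4 T N B1 B2)) N
  <-> a2 = 0 /\ b2 = 0 /\ a3 * b4 - a4 * b3 <> 0.
Proof.
rewrite lin_indep_comb_iff, parallel_normal_iff, <- minors_condition. tauto.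
Qed.

Lemma displacement_zero_iff (O : Vec4) (a b c d : R) :
  vadd O (comb a b c d T N B1 B2) = O <-> a = 0 /\ b = 0 /\ c = 0 /\ d = 0.
Proof.
rewrite vadd_eq_self, <- (comb_zero T N B1 B2). split.
- apply comb_inj.
- intros (-> & -> & -> & ->). reflexivity.
Qed.

End OrthonormalFrame.

Lemma deriv_const (D : R -> Prop) (c x : R) : deriv_within D (fun _ => c) x 0.
Proof.
intros eps Heps. exists 1; split; [lra|]. intros h Hh _ _.
replace ((c - c) / h - 0) with 0 by (field; exact Hh). rewrite Rabs_R0; exact Heps.
Qed.

Lemma deriv_plus (D : R -> Prop) (f g : R -> R) (x a b : R) :
  deriv_within D f x a -> deriv_within D g x b ->
  deriv_within D (fun y => f y + g y) x (a + b).
Proof.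
intros Hf Hg eps Heps.
destruct (Hf (eps / 2)) as [d1 [Hd1 H1]]; [lra|].
destruct (Hg (eps / 2)) as [d2 [Hd2 H2]]; [lra|].
exists (Rmin d1 d2); split; [apply Rmin_pos; assumption|].
intros h Hh Hsmall HD.
pose proof (H1 h Hh (Rlt_le_trans _ _ _ Hsmall (Rmin_l _ _)) HD).
pose proof (H2 h Hh (Rlt_le_trans _ _ _ Hsmall (Rmin_r _ _)) HD).
replace ((f (x + h) + g (x + h) - (f x + g x)) / h - (a + b)) with
  (((f (x + h) - f x) / h - a) + ((g (x + h) - g x) / h - b)) by (unfold Rdiv; ring).
eapply Rle_lt_trans; [apply Rabs_triang | lra].
Qed.

Lemma deriv_scal (D : R -> Prop) (f : R -> R) (x a c : R) :
  deriv_within D f x a -> deriv_within D (fun y => c * f y) x (c * a).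
Proof.
intros Hf eps Heps.
assert (Hc : 0 < Rabs c + 1) by (pose proof (Rabs_pos c); lra).
destruct (Hf (eps / (Rabs c + 1))) as [d [Hd H1]]; [apply Rdiv_lt_0_compat; lra|].
exists d; split; [exact Hd|]. intros h Hh Hsmall HD.
replace ((c * f (x + h) - c * f x) / h - c * a) with
  (c * ((f (x + h) - f x) / h - a)) by (unfold Rdiv; ring).
rewrite Rabs_mult.
pose proof (H1 h Hh Hsmall HD) as Hq.
pose proof (Rabs_pos ((f (x + h) - f x) / h - a)).
apply (Rmult_lt_compat_l (Rabs c + 1)) in Hq; [|lra].
replace ((Rabs c + 1) * (eps / (Rabs c + 1))) with eps in Hq by (field; lra).
nra.
Qed.

Lemma deriv_ext (D : R -> Prop) (f g : R -> R) (x l : R) :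
  (forall y, f y = g y) -> deriv_within D f x l -> deriv_within D g x l.
Proof.
intros E Hf eps Heps. destruct (Hf eps Heps) as [d [Hd H]].
exists d; split; [exact Hd|]. intros h Hh Hsmall HD. rewrite <- !E. auto.
Qed.

Lemma deriv_ext_in (D : R -> Prop) (f g : R -> R) (x l : R) :
  D x -> (forall y, D y -> f y = g y) -> deriv_within D f x l -> deriv_within D g x l.
Proof.
intros Dx E Hf eps Heps. destruct (Hf eps Heps) as [d [Hd H]].
exists d; split; [exact Hd|]. intros h Hh Hsmall HD. rewrite <- !E; auto.
Qed.

Lemma vderiv_ext_in (D : R -> Prop) (F G : R -> Vec4) (x : R) (L : Vec4) :
  D x -> (forall y, D y -> F y = G y) -> vderiv_within D F x L -> vderiv_within D G x L.
Proof.
intros Dx E (H0 & H1 & H2 & H3).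
repeat split; (eapply deriv_ext_in; [exact Dx | | eassumption]);
  intros y Dy; cbv beta; rewrite E by exact Dy; reflexivity.
Qed.

Lemma vderiv_frame_affine (D : R -> Prop) (x : R) (O T N B1 B2 : Vec4)
  (f1 f2 f3 f4 : R -> R) (d1 d2 d3 d4 : R) :
  deriv_within D f1 x d1 -> deriv_within D f2 x d2 ->
  deriv_within D f3 x d3 -> deriv_within D f4 x d4 ->
  vderiv_within D (fun y => vadd O (comb (f1 y) (f2 y) (f3 y) (f4 y) T N B1 B2)) x
    (comb d1 d2 d3 d4 T N B1 B2).
Proof.
intros H1 H2 H3 H4.
assert (Hcomp : forall g1 g2 g3 g4 o : R,
  deriv_within D (fun y => o + (f1 y * g1 + (f2 y * g2 + (f3 y * g3 + f4 y * g4)))) x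
    (d1 * g1 + (d2 * g2 + (d3 * g3 + d4 * g4)))).
{ intros g1 g2 g3 g4 o.
  rewrite <- (Rplus_0_l (d1 * g1 + _)).
  repeat apply deriv_plus; try apply deriv_const;
    (eapply deriv_ext; [intros y; apply Rmult_comm | rewrite Rmult_comm; apply deriv_scal];
     assumption). }
repeat split; apply Hcomp.
Qed.

Lemma interval_nearby_point (a b x d : R) :
  a < b -> in_cl a b x -> 0 < d -> exists h, h <> 0 /\ Rabs h < d /\ in_cl a b (x + h).
Proof.
intros Hab [Hx1 Hx2] Hd. unfold in_cl.
destruct (Rlt_le_dec x b).
- exists (Rmin (d / 2) (b - x)).
  assert (0 < Rmin (d / 2) (b - x)) by (apply Rmin_pos; lra).
  pose proof (Rmin_l (d / 2) (b - x)); pose proof (Rmin_r (d / 2) (b - x)).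
  rewrite Rabs_pos_eq by lra. repeat split; lra.
- exists (- Rmin (d / 2) (b - a)).
  assert (0 < Rmin (d / 2) (b - a)) by (apply Rmin_pos; lra).
  pose proof (Rmin_l (d / 2) (b - a)); pose proof (Rmin_r (d / 2) (b - a)).
  rewrite Rabs_Ropp, Rabs_pos_eq by lra. repeat split; lra.
Qed.

Lemma deriv_unique (a b : R) (f : R -> R) (x l1 l2 : R) :
  a < b -> in_cl a b x ->
  deriv_within (in_cl a b) f x l1 -> deriv_within (in_cl a b) f x l2 -> l1 = l2.
Proof.
intros Hab Hx H1 H2.
destruct (Req_dec l1 l2) as [|Hne]; [assumption | exfalso].
assert (Hp : 0 < Rabs (l1 - l2) / 2)
  by (apply Rdiv_lt_0_compat; [apply Rabs_pos_lt; lra | lra]).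
destruct (H1 _ Hp) as [d1 [Hd1 A1]], (H2 _ Hp) as [d2 [Hd2 A2]].
destruct (interval_nearby_point a b x (Rmin d1 d2) Hab Hx (Rmin_pos _ _ Hd1 Hd2))
  as [h [Hh [Hsmall HD]]].
pose proof (A1 h Hh (Rlt_le_trans _ _ _ Hsmall (Rmin_l _ _)) HD).
pose proof (A2 h Hh (Rlt_le_trans _ _ _ Hsmall (Rmin_r _ _)) HD).
set (Q := (f (x + h) - f x) / h) in *.
assert (Rabs (l1 - l2) <= Rabs (Q - l2) + Rabs (Q - l1)).
{ replace (l1 - l2) with ((Q - l2) + - (Q - l1)) by ring.
  eapply Rle_trans; [apply Rabs_triang | rewrite Rabs_Ropp; lra]. }
lra.
Qed.

Lemma vderiv_unique (a b : R) (F : R -> Vec4) (x : R) (L L' : Vec4) :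
  a < b -> in_cl a b x ->
  vderiv_within (in_cl a b) F x L -> vderiv_within (in_cl a b) F x L' -> L = L'.
Proof.
destruct L as [p0 p1 p2 p3], L' as [q0 q1 q2 q3].
intros Hab Hx (A0 & A1 & A2 & A3) (B0 & B1 & B2 & B3); simpl in *.
f_equal; eapply deriv_unique; eauto.
Qed.

(* When the curve and the t- and q-slices of P have known derivatives T, A, B,
   r is an isogeodesic of P iff along the curve P(s,t0,q0) = r(s), T, A, B are
   independent and T (x) A (x) B is parallel to N (since then dP/ds = T). *)
Lemma isogeodesic_iff (L1 L2 T1 T2 Q1 Q2 t0 q0 : R) (P : R -> R -> R -> Vec4)
  (r T N A B : R -> Vec4) :
  L1 < L2 -> T1 < T2 -> Q1 < Q2 -> in_cl T1 T2 t0 -> in_cl Q1 Q2 q0 ->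
  (forall s, in_cl L1 L2 s -> vderiv_within (in_cl L1 L2) r s (T s)) ->
  (forall s, in_cl L1 L2 s -> vderiv_within (in_cl T1 T2) (fun t => P s t q0) t0 (A s)) ->
  (forall s, in_cl L1 L2 s -> vderiv_within (in_cl Q1 Q2) (fun q => P s t0 q) q0 (B s)) ->
  isogeodesic L1 L2 T1 T2 Q1 Q2 t0 q0 P r N <->
  (forall s, in_cl L1 L2 s ->
     P s t0 q0 = r s /\ lin_indep3 (T s) (A s) (B s) /\
     parallel4 (cross4 (T s) (A s) (B s)) (N s)).
Proof.
intros HL HT HQ Ht0 Hq0 Dr DA DB.
assert (Ds : forall s, in_cl L1 L2 s -> (forall y, in_cl L1 L2 y -> P y t0 q0 = r y) ->
          vderiv_within (in_cl L1 L2) (fun y => P y t0 q0) s (T s)).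
{ intros s Hs Hon. apply (vderiv_ext_in _ r); auto. intros y Hy; symmetry; auto. }
split.
- intros Hiso s Hs.
  destruct (Hiso s Hs) as [Hon [Ps [Pt [Pq (HPs & HPt & HPq & Hind & Hpar)]]]].
  assert (Hon_all : forall y, in_cl L1 L2 y -> P y t0 q0 = r y)
    by (intros y Hy; apply (Hiso y Hy)).
  rewrite (vderiv_unique _ _ _ _ _ _ HL Hs HPs (Ds s Hs Hon_all)) in Hind, Hpar.
  rewrite (vderiv_unique _ _ _ _ _ _ HT Ht0 HPt (DA s Hs)) in Hind, Hpar.
  rewrite (vderiv_unique _ _ _ _ _ _ HQ Hq0 HPq (DB s Hs)) in Hind, Hpar.
  auto.
- intros Hcond s Hs. destruct (Hcond s Hs) as (Hon & Hind & Hpar).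
  split; [exact Hon|]. exists (T s), (A s), (B s).
  refine (conj _ (conj (DA s Hs) (conj (DB s Hs) (conj Hind Hpar)))).
  apply Ds; [exact Hs | intros y Hy; apply (Hcond y Hy)].
Qed.

Lemma marching_isogeodesic_at (O T N B1 B2 : Vec4)
  (l m n p U V W X Ut Uq Vt Vq Wt Wq Xt Xq : R) :
  orthonormal4 T N B1 B2 -> l <> 0 -> m <> 0 -> n <> 0 -> p <> 0 ->
  (vadd O (comb (l * U) (m * V) (n * W) (p * X) T N B1 B2) = O /\
   lin_indep3 T (comb (l * Ut) (m * Vt) (n * Wt) (p * Xt) T N B1 B2)
                (comb (l * Uq) (m * Vq) (n * Wq) (p * Xq) T N B1 B2) /\
   parallel4 (cross4 T (comb (l * Ut) (m * Vt) (n * Wt) (p * Xt) T N B1 B2)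
                       (comb (l * Uq) (m * Vq) (n * Wq) (p * Xq) T N B1 B2)) N)
  <-> (U = 0 /\ V = 0 /\ W = 0 /\ X = 0 /\ Vt = 0 /\ Vq = 0 /\ Wt * Xq - Wq * Xt <> 0).
Proof.
intros frame hl hm hn hp.
rewrite (displacement_zero_iff T N B1 B2 frame), (frame_isogeodesic_condition T N B1 B2 frame).
replace (n * Wt * (p * Xq) - p * Xt * (n * Wq)) with (n * p * (Wt * Xq - Wq * Xt)) by ring.
assert (Hnp : n * p <> 0) by (apply Rmult_integral_contrapositive_currified; assumption).
assert (Hprod : forall c y, c <> 0 -> (c * y = 0 <-> y = 0)).
{ intros c y Hc; split; [intros E; destruct (Rmult_integral _ _ E); tauto | intros ->; ring]. }
rewrite !Hprod by assumption.
tauto.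
Qed.

Theorem mainTheorem2
  (L1 L2 T1 T2 Q1 Q2 t0 q0 : R)
  (r T N B1 B2 : R -> Vec4) (k1 k2 k3 : R -> R)
  (l m n p l' m' n' p' : R -> R)
  (U V W X Ut Uq Vt Vq Wt Wq Xt Xq : R -> R -> R) :
  L1 < L2 -> T1 < T2 -> Q1 < Q2 ->
  in_cl T1 T2 t0 -> in_cl Q1 Q2 q0 ->
  frenet4 L1 L2 r T N B1 B2 k1 k2 k3 ->
  C1_on (in_cl L1 L2) l l' -> C1_on (in_cl L1 L2) m m' ->
  C1_on (in_cl L1 L2) n n' -> C1_on (in_cl L1 L2) p p' ->
  C1_on2 (in_cl T1 T2) (in_cl Q1 Q2) U Ut Uq ->
  C1_on2 (in_cl T1 T2) (in_cl Q1 Q2) V Vt Vq ->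
  C1_on2 (in_cl T1 T2) (in_cl Q1 Q2) W Wt Wq ->
  C1_on2 (in_cl T1 T2) (in_cl Q1 Q2) X Xt Xq ->
  (forall s, in_cl L1 L2 s -> l s <> 0 /\ m s <> 0 /\ n s <> 0 /\ p s <> 0) ->
  (isogeodesic L1 L2 T1 T2 Q1 Q2 t0 q0
     (marching r T N B1 B2
        (fun s t q => l s * U t q) (fun s t q => m s * V t q)
        (fun s t q => n s * W t q) (fun s t q => p s * X t q))
     r N
   <->
   (U t0 q0 = 0 /\ V t0 q0 = 0 /\ W t0 q0 = 0 /\ X t0 q0 = 0 /\
    Vt t0 q0 = 0 /\ Vq t0 q0 = 0 /\
    Wt t0 q0 * Xq t0 q0 - Wq t0 q0 * Xt t0 q0 <> 0)).
Proof.
intros HL HT HQ Ht0 Hq0 Hfr _ _ _ _ [HU _] [HV _] [HW _] [HX _] Hnz.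
destruct (HU t0 q0 Ht0 Hq0) as [HUt HUq], (HV t0 q0 Ht0 Hq0) as [HVt HVq],
  (HW t0 q0 Ht0 Hq0) as [HWt HWq], (HX t0 q0 Ht0 Hq0) as [HXt HXq].
(* Reduce to a pointwise condition: r' = T, and the t- and q-derivatives of P
   along the curve have frame coordinates (l Ut, m Vt, n Wt, p Xt), (l Uq, ...). *)
rewrite (isogeodesic_iff L1 L2 T1 T2 Q1 Q2 t0 q0 _ r T N
  (fun s => comb (l s * Ut t0 q0) (m s * Vt t0 q0) (n s * Wt t0 q0) (p s * Xt t0 q0)
                 (T s) (N s) (B1 s) (B2 s))
  (fun s => comb (l s * Uq t0 q0) (m s * Vq t0 q0) (n s * Wq t0 q0) (p s * Xq t0 q0)
                 (T s) (N s) (B1 s) (B2 s)));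
  try (intros s Hs; apply vderiv_frame_affine; apply deriv_scal; assumption);
  try (intros s Hs; exact (proj1 (proj2 (proj2 (Hfr s Hs))))); try assumption.
assert (HL1 : in_cl L1 L2 L1) by (unfold in_cl; lra).
pose (at_point s := marching_isogeodesic_at (r s) (T s) (N s) (B1 s) (B2 s)
  (l s) (m s) (n s) (p s) (U t0 q0) (V t0 q0) (W t0 q0) (X t0 q0)
  (Ut t0 q0) (Uq t0 q0) (Vt t0 q0) (Vq t0 q0) (Wt t0 q0) (Wq t0 q0) (Xt t0 q0) (Xq t0 q0)).
split.
- intros Hcond. destruct (Hnz L1 HL1) as (hl & hm & hn & hp).
  exact (proj1 (at_point L1 (proj1 (Hfr L1 HL1)) hl hm hn hp) (Hcond L1 HL1)).
- intros Hc s Hs. destruct (Hnz s Hs) as (hl & hm & hn & hp).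
  exact (proj2 (at_point s (proj1 (Hfr s Hs)) hl hm hn hp) Hc).
Qed.
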